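(* Let $(\Delta,\delta)$ be a building of type $(W,S)$ and let $G$ be a group acting on $\Delta$ by type-preserving automorphisms such that the action is Weyl-transitive. Let $a$ and $b$ be two simplices with residues $\mathcal{A}$ and $\mathcal{B}$ respectively. Then: (1) the stabilizer $G_b$ acts transitively on the set of simplices of the same type as $a$ whose residues $\mathcal{R}$ satisfy $\min\delta(\mathcal{B},\mathcal{R})=\min\delta(\mathcal{B},\mathcal{A})$; (2) the subgroup $G_a\cap G_b$ acts transitively on $\operatorname{proj}_{\mathcal{A}}(\mathcal{B})$, on $\operatorname{proj}_{\mathcal{B}}(\mathcal{A})$, and on the set of ordered pairs $(x,y)\in\operatorname{proj}_{\mathcal{A}}(\mathcal{B})\times\operatorname{proj}_{\mathcal{B}}(\mathcal{A})$ with $\delta(x,y)=\min\delta(\mathcal{A},\mathcal{B})$.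
   Context: A building of type $(W,S)$ ($S$ finite, $\ell$ the length function) is a set $\Delta$ of chambers with a Weyl distance $\delta:\Delta\times\Delta\to W$ satisfying the standard axioms. For $J\subseteq S$ let $W_J=\langle J\rangle$; $J$ is spherical if $W_J$ is finite. The $J$-residue of a chamber $x$ is $R_J(x)=\{y\in\Delta:\delta(x,y)\in W_J\}$. The building is viewed as a simplicial complex whose simplices are the spherical residues (ordered by reverse inclusion; chambers are the maximal simplices); the simplex corresponding to a residue of type $J$ has cotype $J$, and simplices have the same type iff they have the same cotype. An automorphism is type-preserving if $\delta(gx,gy)=\delta(x,y)$ for all chambers $x,y$. A group $G$ of such automorphisms is Weyl-transitive if for all chambers $x,y,x',y'$ with $\delta(x,y)=\delta(x',y')$ there is $g\in G$ with $g.x=x'$, $g.y=y'$. $G_b$ denotes the stabilizer of the simplex $b$. For a residue $\mathcal{R}$ and a chamber $x$, $\operatorname{proj}_{\mathcal{R}}(x)$ is the unique chamber of $\mathcal{R}$ at minimal gallery distance from $x$; for residues $\mathcal{A},\mathcal{B}$, $\operatorname{proj}_{\mathcal{B}}(\mathcal{A})=\{\operatorname{proj}_{\mathcal{B}}(x):x\in\mathcal{A}\}$. The set $\delta(\mathcal{A},\mathcal{B})=\{\delta(x,y):x\in\mathcal{A},y\in\mathcal{B}\}$ has a unique element of minimal length, denoted $\min\delta(\mathcal{A},\mathcal{B})$. *)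

(* Buildings of type (W,S) via the W-metric (Weyl distance)
   definition, with (W,S) a Coxeter system given by its presentation. *)
From Stdlib Require Import List Arith.
Import ListNotations.
Set Implicit Arguments.

Record group := Group {
  gcar :> Type;
  gmul : gcar -> gcar -> gcar;
  gone : gcar;
  ginv : gcar -> gcar;
  gmulA : forall x y z, gmul x (gmul y z) = gmul (gmul x y) z;
  gmul1l : forall x, gmul gone x = x;
  gmul1r : forall x, gmul x gone = x;
  gmulVl : forall x, gmul (ginv x) x = gone;
  gmulVr : forall x, gmul x (ginv x) = gone }.
Arguments gmul {g}.
Arguments gone {g}.
Arguments ginv {g}.

Fixpoint gpow (G : group) (x : G) (n : nat) : G :=
  match n with 0 => gone | S n => gmul x (gpow G x n) end.

Arguments gpow {G}.
Definition gprod (G : group) (l : list G) : G := fold_right gmul gone l.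

Arguments gprod {G}.
Definition ghom (G H : group) (phi : G -> H) : Prop :=
  forall x y, phi (gmul x y) = gmul (phi x) (phi y).

(* (W,S) is a Coxeter system: S is a finite set of involutions generating W,
   and W has the presentation < S | (st)^{m_st} = 1 >, expressed by the
   universal property: every map f from S to a group H respecting the
   relations (st)^n = 1 valid in W extends to a homomorphism W -> H. *)
Arguments ghom {G H}.
Record coxeter := Coxeter {
  cW :> group;
  cS : list cW;
  cS_inv : forall s, In s cS -> gmul s s = gone;
  cS_ne1 : forall s, In s cS -> s <> gone;
  cS_gen : forall w : cW, exists l, Forall (fun s => In s cS) l /\ gprod l = w;
  cS_univ : forall (H : group) (f : cW -> H),
     (forall s t, In s cS -> In t cS -> forall n,
         gpow (gmul s t) n = gone -> gpow (gmul (f s) (f t)) n = gone) ->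
     exists phi : cW -> H, ghom phi /\ forall s, In s cS -> phi s = f s }.

Section Coxeter.
Variable C : coxeter.

Definition len_le (w : C) (n : nat) : Prop :=
  exists l, Forall (fun s => In s (cS C)) l /\ length l <= n /\ gprod l = w.

Definition is_len (w : C) (n : nat) : Prop :=
  len_le w n /\ forall m, len_le w m -> n <= m.

Definition ell_le (w w' : C) : Prop := forall n, len_le w' n -> len_le w n.

Definition subS (J : C -> Prop) : Prop := forall s, J s -> In s (cS C).

Definition inWJ (J : C -> Prop) (w : C) : Prop :=
  exists l, Forall J l /\ gprod l = w.

Definition spherical (J : C -> Prop) : Prop :=
  exists l : list C, forall w, inWJ J w -> In w l.
End Coxeter.
Arguments len_le {C}. Arguments is_len {C}. Arguments ell_le {C}.
Arguments subS {C}. Arguments inWJ {C}. Arguments spherical {C}.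

Record building (C : coxeter) := Building {
  Ch :> Type;
  delta : Ch -> Ch -> C;
  Ch_inh : inhabited Ch;
  WD1 : forall x y, delta x y = gone <-> x = y;
  WD2 : forall (s : C) x y x', In s (cS C) -> delta x' x = s ->
          (delta x' y = gmul s (delta x y) \/ delta x' y = delta x y) /\
          (forall n, is_len (delta x y) n -> is_len (gmul s (delta x y)) (S n) ->
                     delta x' y = gmul s (delta x y));
  WD3 : forall (s : C) x y, In s (cS C) ->
          exists x', delta x' x = s /\ delta x' y = gmul s (delta x y) }.
Arguments delta {C} b _ _.

Section Building.
Variable C : coxeter.
Variable B : building C.

Definition chset := B -> Prop.

Definition is_residue (J : C -> Prop) (R : chset) : Prop :=
  exists x : B, forall y, R y <-> inWJ J (delta B x y).

(* simplices = spherical residues (identified with their sets of chambers) *)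
Definition simplex (R : chset) : Prop :=
  exists J, subS J /\ spherical J /\ is_residue J R.

(* same type (= same cotype) *)
Definition same_type (R R' : chset) : Prop :=
  exists J, subS J /\ spherical J /\ is_residue J R /\ is_residue J R'.

Inductive gal_le : B -> B -> nat -> Prop :=
  | gal_refl : forall x n, gal_le x x n
  | gal_step : forall x y z n, In (delta B x y) (cS C) -> gal_le y z n ->
                 gal_le x z (S n).

Definition gdist_le (x z y : B) : Prop := forall n, gal_le x y n -> gal_le x z n.

Definition is_proj (R : chset) (x z : B) : Prop :=
  R z /\ forall y, R y -> gdist_le x z y.

Definition proj_set (R A : chset) : chset :=
  fun z => exists x, A x /\ is_proj R x z.

Definition delta_set (A R : chset) (w : C) : Prop :=
  exists x y, A x /\ R y /\ delta B x y = w.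

Definition is_min_delta (A R : chset) (w : C) : Prop :=
  delta_set A R w /\ forall w', delta_set A R w' -> ell_le w w'.

Definition same_min_delta (A R A' R' : chset) : Prop :=
  exists w, is_min_delta A R w /\ is_min_delta A' R' w.
End Building.

Section Action.
Variable C : coxeter.
Variable B : building C.
Variable G : group.
Variable act : G -> B -> B.

Definition is_action : Prop :=
  (forall x, act gone x = x) /\ (forall g h x, act (gmul g h) x = act g (act h x)).

Definition type_preserving : Prop :=
  forall g x y, delta B (act g x) (act g y) = delta B x y.

Definition weyl_transitive : Prop :=
  forall x y x' y', delta B x y = delta B x' y' ->
    exists g, act g x = x' /\ act g y = y'.

Definition img (g : G) (R : chset B) : chset B := fun y => exists x, R x /\ act g x = y.

Definition set_eq (R R' : chset B) : Prop := forall y, R y <-> R' y.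

Definition stab (R : chset B) (g : G) : Prop := set_eq (img g R) R.
End Action.
Arguments chset {C} B.
Arguments is_residue {C B}. Arguments simplex {C B}. Arguments same_type {C B}.
Arguments gdist_le {C B}. Arguments is_proj {C B}. Arguments proj_set {C B}.
Arguments delta_set {C B}. Arguments is_min_delta {C B}. Arguments same_min_delta {C B}.
Arguments is_action {C B G}. Arguments type_preserving {C B G}.
Arguments weyl_transitive {C B G}. Arguments img {C B G}. Arguments set_eq {C B}.
Arguments stab {C B G}.

(* Both parts come down to Weyl-transitivity once the relevant Weyl distances are pinned down.
   A type-preserving [g] sending a chamber of a [J]-residue [R] to a chamber of a [J]-residue [R']
   maps [R] onto [R'].  Hence [G_a ∩ G_b] is transitive on the pairs [(x,y)] in [A × B] with a
   prescribed [δ(x,y)], and [G_b] maps [R] onto [A] as soon as [min δ(B,R) = min δ(B,A)].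
   For (2) one needs that every [x] in [proj_A(B)] lies in such a pair with
   [δ(x,y) = min δ(A,B)]: choosing [y] in [B] closest to [x], the element [δ(x,y)] is left
   [W_I]-reduced and right [W_J]-reduced, and such an element of a double coset
   [W_I w W_J] is unique.  These facts about [(W,S)] are derived from its presentation via the
   exchange condition, which is proved with Tits' reflection cocycle. *)

From Stdlib Require Import List Arith Lia Bool Classical ClassicalEpsilon FunctionalExtensionality.
Import ListNotations.

Arguments gmulA {g} x y z.
Arguments gmul1l {g} x.
Arguments gmul1r {g} x.
Arguments gmulVl {g} x.
Arguments gmulVr {g} x.

Section GroupTheory.
Context {G : group}.
Implicit Types x y z : G.

Lemma gmul_cancel_l x y z : gmul x y = gmul x z -> y = z.
Proof.
  intro E. rewrite <- (gmul1l y), <- (gmul1l z), <- (gmulVl x), <- !gmulA, E. reflexivity.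
Qed.

Lemma gmul_cancel_r x y z : gmul y x = gmul z x -> y = z.
Proof.
  intro E. rewrite <- (gmul1r y), <- (gmul1r z), <- (gmulVr x), !gmulA, E. reflexivity.
Qed.

Lemma ginv_unique x y : gmul x y = gone -> ginv x = y.
Proof. intro E. apply (gmul_cancel_l x). rewrite gmulVr. auto. Qed.

Lemma ginvK x : ginv (ginv x) = x.
Proof. apply ginv_unique, gmulVl. Qed.

Lemma ginv1 : ginv (@gone G) = gone.
Proof. apply ginv_unique, gmul1l. Qed.

Lemma ginvM x y : ginv (gmul x y) = gmul (ginv y) (ginv x).
Proof. apply ginv_unique. rewrite gmulA, <- (gmulA x y), gmulVr, gmul1r, gmulVr. auto. Qed.

Lemma gmulKg x y : gmul (ginv x) (gmul x y) = y.
Proof. rewrite gmulA, gmulVl, gmul1l. auto. Qed.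

Lemma gmulKVg x y : gmul x (gmul (ginv x) y) = y.
Proof. rewrite gmulA, gmulVr, gmul1l. auto. Qed.

Lemma gmulgK x y : gmul (gmul y x) (ginv x) = y.
Proof. rewrite <- gmulA, gmulVr, gmul1r. auto. Qed.

Lemma gmulgKV x y : gmul (gmul y (ginv x)) x = y.
Proof. rewrite <- gmulA, gmulVl, gmul1r. auto. Qed.

Lemma ginv_invol x : gmul x x = gone -> ginv x = x.
Proof. apply ginv_unique. Qed.

Lemma gpowD x m n : gpow x (m + n) = gmul (gpow x m) (gpow x n).
Proof. induction m; simpl. rewrite gmul1l; auto. rewrite IHm, gmulA; auto. Qed.

Lemma gpowSr x n : gpow x (S n) = gmul (gpow x n) x.
Proof. rewrite <- Nat.add_1_r, gpowD. simpl. rewrite gmul1r. auto. Qed.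

Lemma gprod_app (l1 l2 : list G) : gprod (l1 ++ l2) = gmul (gprod l1) (gprod l2).
Proof. induction l1; simpl. rewrite gmul1l; auto. rewrite IHl1, gmulA; auto. Qed.

Definition gconj (a r : G) : G := gmul (gmul a r) (ginv a).

Lemma gconjM a b r : gconj (gmul a b) r = gconj a (gconj b r).
Proof. unfold gconj. rewrite ginvM, !gmulA. auto. Qed.

Lemma gconj1 r : gconj gone r = r.
Proof. unfold gconj. rewrite ginv1, gmul1l, gmul1r. auto. Qed.

Lemma gconjK a r : gconj (ginv a) (gconj a r) = r.
Proof. rewrite <- gconjM, gmulVl, gconj1. auto. Qed.

Lemma gconjE a r q : gconj a r = q <-> r = gmul (gmul (ginv a) q) a.
Proof.
  unfold gconj. split; intros E; subst.
  - rewrite <- !gmulA, gmulVl, gmul1r, gmulKg. auto.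
  - rewrite !gmulA, gmulVr, gmul1l, gmulgK. auto.
Qed.
End GroupTheory.

Lemma least_nat (P : nat -> Prop) :
  (exists n, P n) -> exists n, P n /\ forall m, P m -> n <= m.
Proof.
  intros H.
  destruct (dec_inh_nat_subset_has_unique_least_element P (fun n => classic (P n)) H)
    as [n [[Pn Hmin] _]].
  eauto.
Qed.

Definition ceqb {T : Type} (x y : T) : bool :=
  if excluded_middle_informative (x = y) then true else false.

Lemma ceqb_true {T} (x y : T) : ceqb x y = true <-> x = y.
Proof. unfold ceqb. destruct excluded_middle_informative; split; congruence. Qed.

Lemma ceqb_false {T} (x y : T) : ceqb x y = false <-> x <> y.
Proof. unfold ceqb. destruct excluded_middle_informative; split; congruence. Qed.

Lemma ceqb_iff {T T'} (x y : T) (x' y' : T') : (x = y <-> x' = y') -> ceqb x y = ceqb x' y'.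
Proof. intro H. unfold ceqb. do 2 destruct excluded_middle_informative; tauto. Qed.

Fixpoint xor_sum (n : nat) (F : nat -> bool) : bool :=
  match n with 0 => false | S n => xorb (xor_sum n F) (F n) end.

Lemma xor_sum_ext n F F' : (forall k, k < n -> F k = F' k) -> xor_sum n F = xor_sum n F'.
Proof. induction n; simpl; intro H; auto. rewrite IHn, H; auto. Qed.

Lemma xor_sumD m n F : xor_sum (m + n) F = xorb (xor_sum m F) (xor_sum n (fun k => F (m + k))).
Proof.
  induction n; simpl.
  - rewrite Nat.add_0_r, xorb_false_r. auto.
  - rewrite Nat.add_succ_r. simpl. rewrite IHn, xorb_assoc. auto.
Qed.

Lemma xor_sum_two_periods n F : (forall k, F (n + k) = F k) -> xor_sum (n + n) F = false.
Proof.
  intro Hper. rewrite xor_sumD, (xor_sum_ext n (fun k => F (n + k)) F) by auto.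
  apply xorb_nilpotent.
Qed.

Lemma Forall_delete {X : Type} (P : X -> Prop) m a q : Forall P (m ++ a :: q) -> Forall P (m ++ q).
Proof. intro H. apply Forall_app in H as [Hm Haq]. inversion Haq. apply Forall_app. auto. Qed.

Lemma app_eq_app_cons {X : Type} (r l p q : list X) a : r ++ l = p ++ a :: q ->
  (exists m, r = p ++ a :: m /\ q = m ++ l) \/ (exists m, l = m ++ a :: q /\ p = r ++ m).
Proof.
  intro E. destruct (app_eq_app _ _ _ _ E) as [[|b m] [[E1 E2] | [E1 E2]]];
    simpl in *; subst.
  - right. exists []. rewrite !app_nil_r. auto.
  - right. exists []. rewrite !app_nil_r. auto.
  - left. inversion E2; subst. exists m. auto.
  - right. exists (b :: m). auto.
Qed.

Definition Z2 : group.
Proof.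
  refine (@Group bool xorb false (fun b => b) _ _ _ _ _); intros; destruct_all bool; auto.
Defined.

Lemma gpow_Z2_false n : @gpow Z2 false n = false.
Proof. induction n; simpl; auto. Qed.

Section Coxeter.
Variable C : coxeter.
Notation W := (cW C).
Notation gen s := (In s (cS C)).

(** * Length *)

Lemma gen_inv s : gen s -> ginv s = s.
Proof. intro Hs. apply ginv_invol, cS_inv; auto. Qed.

Lemma gen_mulKg s x : gen s -> gmul s (gmul s x) = x.
Proof. intro Hs. rewrite gmulA, cS_inv, gmul1l; auto. Qed.

Lemma gen_mulgK s x : gen s -> gmul (gmul x s) s = x.
Proof. intro Hs. rewrite <- gmulA, cS_inv, gmul1r; auto. Qed.

Lemma gprod_rev (l : list W) : Forall (fun s => gen s) l -> gprod (rev l) = ginv (gprod l).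
Proof.
  induction 1 as [|s l Hs _ IH]; simpl. { rewrite ginv1; auto. }
  rewrite gprod_app, IH, ginvM, (gen_inv s) by auto. simpl. rewrite gmul1r. auto.
Qed.

Lemma is_len_exists (w : W) : exists n, is_len w n.
Proof.
  destruct (cS_gen C w) as [l [Hl Hw]].
  destruct (least_nat (len_le w)) as [n [Hn Hmin]].
  - exists (length l), l. auto.
  - exists n. split; auto.
Qed.

Definition ell (w : W) : nat :=
  proj1_sig (constructive_indefinite_description _ (is_len_exists w)).

Lemma ell_spec w : is_len w (ell w).
Proof. unfold ell. destruct constructive_indefinite_description; auto. Qed.

Lemma reduced_word_exists w :
  exists l, Forall (fun s => gen s) l /\ length l = ell w /\ gprod l = w.
Proof.
  destruct (ell_spec w) as [[l [Hl [Hlen Hw]]] Hmin].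
  exists l. repeat split; auto. apply Nat.le_antisymm; auto. apply Hmin. exists l. auto.
Qed.

Lemma len_leE w n : len_le w n <-> ell w <= n.
Proof.
  destruct (reduced_word_exists w) as [l [Hl [Hlen Hw]]]. split.
  - apply (proj2 (ell_spec w)).
  - intro H. exists l. repeat split; auto. lia.
Qed.

Lemma is_lenE w n : is_len w n <-> ell w = n.
Proof.
  split.
  - intros [Hn Hmin]. apply Nat.le_antisymm; [apply len_leE | apply Hmin, len_leE]; auto.
  - intros <-. apply ell_spec.
Qed.

Lemma ell_leE w w' : ell_le w w' <-> ell w <= ell w'.
Proof.
  split.
  - intro H. apply len_leE, H, len_leE. auto.
  - intros H n Hn. apply len_leE. apply len_leE in Hn. lia.
Qed.

Lemma ell_word (l : list W) : Forall (fun s => gen s) l -> ell (gprod l) <= length l.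
Proof. intro Hl. apply len_leE. exists l. auto. Qed.

Lemma ell_inv w : ell (ginv w) = ell w.
Proof.
  assert (Hle : forall v, ell (ginv v) <= ell v).
  { intro v. destruct (reduced_word_exists v) as [l [Hl [<- <-]]].
    rewrite <- gprod_rev, <- length_rev by auto. apply ell_word, Forall_rev. auto. }
  pose proof (Hle (ginv w)) as H. rewrite ginvK in H. specialize (Hle w). lia.
Qed.

Lemma ell1 : ell gone = 0.
Proof. pose proof (ell_word [] (Forall_nil _)). simpl in H. lia. Qed.

Lemma ell_eq0 w : ell w = 0 -> w = gone.
Proof.
  intro H. destruct (reduced_word_exists w) as [[|s l] [_ [Hlen <-]]]; simpl in *; auto. lia.
Qed.

Lemma ellM u v : ell (gmul u v) <= ell u + ell v.
Proof.
  destruct (reduced_word_exists u) as [l [Hl [<- <-]]].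
  destruct (reduced_word_exists v) as [l' [Hl' [<- <-]]].
  rewrite <- gprod_app, <- length_app. apply ell_word, Forall_app. auto.
Qed.

Lemma ell_gen s : gen s -> ell s = 1.
Proof.
  intro Hs. pose proof (ell_word [s] (ltac:(auto) : Forall (fun s => gen s) [s])) as H.
  simpl in H. rewrite gmul1r in H.
  destruct (ell s) eqn:E; [|lia]. apply ell_eq0 in E. exfalso. exact (cS_ne1 C Hs E).
Qed.

Lemma ell_genM_le s w : gen s -> ell (gmul s w) <= S (ell w).
Proof. intro Hs. pose proof (ellM s w). rewrite (ell_gen s) in H by auto. lia. Qed.

Lemma ell_Mgen_le s w : gen s -> ell (gmul w s) <= S (ell w).
Proof. intro Hs. pose proof (ellM w s). rewrite (ell_gen s) in H by auto. lia. Qed.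

Definition reduced (l : list W) : Prop := Forall (fun s => gen s) l /\ ell (gprod l) = length l.

Lemma reduced_cons_inv s l : reduced (s :: l) -> reduced l.
Proof.
  intros [Hsl E]. apply Forall_cons_iff in Hsl as [Hs Hl]. split; auto. simpl in E.
  pose proof (ell_word l Hl). pose proof (ell_genM_le s (gprod l) Hs). lia.
Qed.

Lemma reduced_snoc_inv l t : reduced (l ++ [t]) -> reduced l.
Proof.
  intros [Hl E]. apply Forall_app in Hl as [Hl Ht]. apply Forall_inv in Ht. split; auto.
  rewrite length_app, gprod_app in E. simpl in E. rewrite gmul1r in E.
  pose proof (ell_word l Hl). pose proof (ell_Mgen_le t (gprod l) Ht). lia.
Qed.

Lemma reduced_rev l : reduced l -> reduced (rev l).
Proof.
  intros [Hl E]. split. { apply Forall_rev; auto. }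
  rewrite gprod_rev, ell_inv, length_rev; auto.
Qed.

Lemma parity_exists :
  exists sg : W -> bool, forall l, Forall (fun s => gen s) l -> sg (gprod l) = Nat.odd (length l).
Proof.
  destruct (cS_univ C Z2 (fun _ => true)) as [sg [Hhom Hgen]].
  { intros. apply gpow_Z2_false. }
  exists sg. induction 1 as [|s l Hs _ IH].
  - simpl. assert (E : sg gone = xorb (sg gone) (sg gone)).
    { change (sg gone = @gmul Z2 (sg gone) (sg gone)). rewrite <- Hhom, gmul1l. auto. }
    destruct (sg gone); [discriminate | reflexivity].
  - simpl. rewrite Hhom. change (xorb (sg s) (sg (gprod l)) = Nat.odd (S (length l))).
    rewrite Hgen, IH, Nat.odd_succ, <- Nat.negb_odd by auto. auto.
Qed.

Lemma ell_genM s w : gen s -> ell (gmul s w) = S (ell w) \/ ell w = S (ell (gmul s w)).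
Proof.
  intro Hs. destruct parity_exists as [sg Hsg].
  destruct (reduced_word_exists w) as [l [Hl [El <-]]].
  destruct (reduced_word_exists (gmul s (gprod l))) as [l' [Hl' [El' Ew']]].
  assert (Hsl : Forall (fun s => gen s) (s :: l)) by auto.
  pose proof (Hsg _ Hsl) as P. simpl in P.
  rewrite <- Ew', Hsg, Nat.odd_succ, <- Nat.negb_odd in P by auto.
  assert (Hne : ell (gmul s (gprod l)) <> ell (gprod l)).
  { intro E. rewrite El', El, E in P. destruct (Nat.odd (ell (gprod l))); discriminate. }
  pose proof (ell_genM_le s (gprod l) Hs) as Hup.
  pose proof (ell_genM_le s (gmul s (gprod l)) Hs) as Hdown.
  rewrite gen_mulKg in Hdown by auto. lia.
Qed.

Lemma ell_Mgen s w : gen s -> ell (gmul w s) = S (ell w) \/ ell w = S (ell (gmul w s)).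
Proof.
  intro Hs. rewrite <- (ell_inv (gmul w s)), <- (ell_inv w), ginvM, (gen_inv s) by auto.
  apply ell_genM; auto.
Qed.

(** * The exchange condition *)

Section Dihedral.
Variables s t : W.
Hypotheses (Hs : gen s) (Ht : gen t).
Notation p := (gmul s t).

Lemma dihedral_pow_swap k : gmul (ginv (gpow p k)) t = gmul t (gpow p k).
Proof.
  induction k as [|k IH]; simpl. { rewrite ginv1, gmul1l, gmul1r. auto. }
  rewrite ginvM, <- gmulA, ginvM, (gen_inv s), (gen_inv t) by auto.
  rewrite <- (gmulA t s t), gmulA, IH, <- gmulA, <- gpowSr. auto.
Qed.

Lemma dihedral_conj_even k : gmul (gmul (ginv (gpow p k)) t) (gpow p k) = gmul t (gpow p (k + k)).
Proof. rewrite dihedral_pow_swap, gpowD, gmulA. auto. Qed.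

Lemma dihedral_conj_odd k :
  gmul (gmul (ginv (gpow p k)) (gmul (gmul (ginv t) s) t)) (gpow p k) = gmul t (gpow p (S (k + k))).
Proof.
  assert (E : gmul (gmul (ginv t) s) t = gmul (ginv p) t).
  { rewrite ginvM, (gen_inv s) by auto. auto. }
  rewrite E, gmulA, <- ginvM.
  change (gmul p (gpow p k)) with (gpow p (S k)).
  rewrite dihedral_pow_swap, <- gmulA, <- gpowD. auto.
Qed.
End Dihedral.

(* Tits' construction: [W] acts by conjugation on its power set (subsets as [W -> bool], added
   by symmetric difference), and [s |-> (s, {s})] extends to a homomorphism into the semidirect
   product.  Its second component [cocycle w] is the set of reflections [r] with
   [ell (w r) < ell w]; for a word it is the parity count of the reflections
   [word_reflections], one per letter. *)
Definition tits_mul (x y : W * (W -> bool)) : W * (W -> bool) :=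
  (gmul (fst x) (fst y), fun r => xorb (snd y r) (snd x (gconj (fst y) r))).

Definition tits_inv (x : W * (W -> bool)) : W * (W -> bool) :=
  (ginv (fst x), fun r => snd x (gconj (ginv (fst x)) r)).

Lemma pair_ext (a a' : W) (f f' : W -> bool) :
  a = a' -> (forall r, f r = f' r) -> (a, f) = (a', f').
Proof. intros <- H. f_equal. apply functional_extensionality. auto. Qed.

Definition tits_group : group.
Proof.
  refine (@Group (W * (W -> bool)) tits_mul (gone, fun _ => false) tits_inv _ _ _ _ _);
    intros; unfold tits_mul, tits_inv; simpl.
  - destruct x as [a f], y as [b g], z as [c h]. apply pair_ext; [apply gmulA|]. intro r. simpl.
    rewrite gconjM, !xorb_assoc. auto.
  - destruct x as [a f]. apply pair_ext; [apply gmul1l|]. intro r. apply xorb_false_r.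
  - destruct x as [a f]. apply pair_ext; [apply gmul1r|]. intro r. rewrite gconj1. auto.
  - destruct x as [a f]. apply pair_ext; [apply gmulVl|]. intro r. rewrite gconjK.
    apply xorb_nilpotent.
  - destruct x as [a f]. apply pair_ext; [apply gmulVr|]. intro r. apply xorb_nilpotent.
Defined.

Definition tits_gen (s : W) : tits_group := (s, fun r => ceqb r s).

Lemma ceqb_gconj (a r q : W) : ceqb (gconj a r) q = ceqb r (gmul (gmul (ginv a) q) a).
Proof. apply ceqb_iff, gconjE. Qed.

Lemma tits_gen_pow s t k : gen s -> gen t ->
  gpow (gmul (tits_gen s) (tits_gen t)) k =
  (gpow (gmul s t) k, fun r => xor_sum (k + k) (fun i => ceqb r (gmul t (gpow (gmul s t) i)))).
Proof.
  intros Hs Ht. induction k as [|k IH]; [reflexivity|].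
  cbn [gpow]. rewrite IH. unfold gmul at 1. simpl. unfold tits_mul. simpl.
  apply pair_ext; auto. intro r.
  rewrite !ceqb_gconj, dihedral_conj_even, dihedral_conj_odd by auto.
  rewrite Nat.add_succ_r. simpl. rewrite !xorb_assoc. auto.
Qed.

(* When [p^n = 1], the sequence [t p^i] for [i < 2n] runs twice through one period. *)
Lemma tits_gen_relation s t n : gen s -> gen t -> gpow (gmul s t) n = gone ->
  gpow (gmul (tits_gen s) (tits_gen t)) n = gone.
Proof.
  intros Hs Ht Hn. rewrite tits_gen_pow by auto. rewrite Hn. apply pair_ext; auto.
  intro r. apply xor_sum_two_periods. intro k. rewrite gpowD, Hn, gmul1l. auto.
Qed.

Lemma tits_hom_exists :
  exists phi : W -> tits_group, ghom phi /\ forall s, gen s -> phi s = tits_gen s.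
Proof. apply cS_univ. intros. apply tits_gen_relation; auto. Qed.

Definition tits_hom : W -> tits_group :=
  proj1_sig (constructive_indefinite_description _ tits_hom_exists).

Lemma tits_hom_spec : ghom tits_hom /\ forall s, gen s -> tits_hom s = tits_gen s.
Proof. unfold tits_hom. destruct constructive_indefinite_description. auto. Qed.

Lemma tits_hom1 : tits_hom gone = gone.
Proof.
  apply (gmul_cancel_l (tits_hom gone)). rewrite <- (proj1 tits_hom_spec), !gmul1r. auto.
Qed.

Lemma fst_tits_hom w : fst (tits_hom w) = w.
Proof.
  destruct (cS_gen C w) as [l [Hl <-]]. induction Hl as [|s l Hs _ IH]; simpl.
  - rewrite tits_hom1. auto.
  - rewrite (proj1 tits_hom_spec), (proj2 tits_hom_spec s Hs). simpl. rewrite IH. auto.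
Qed.

Definition cocycle (w r : W) : bool := snd (tits_hom w) r.

Lemma cocycleM u v r : cocycle (gmul u v) r = xorb (cocycle v r) (cocycle u (gconj v r)).
Proof. unfold cocycle. rewrite (proj1 tits_hom_spec). simpl. rewrite fst_tits_hom. auto. Qed.

Lemma cocycle_gen s r : gen s -> cocycle s r = ceqb r s.
Proof. intro Hs. unfold cocycle. rewrite (proj2 tits_hom_spec s Hs). auto. Qed.

Lemma cocycle_Mgen w s : gen s -> cocycle (gmul w s) s = negb (cocycle w s).
Proof.
  intro Hs. rewrite cocycleM, cocycle_gen, (proj2 (ceqb_true s s)) by auto.
  unfold gconj. rewrite (gen_inv s), gen_mulgK by auto. auto.
Qed.

Fixpoint word_reflections (l : list W) : list W :=
  match l with
  | [] => []
  | s :: l' => gconj (ginv (gprod l')) s :: word_reflections l'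
  end.

Fixpoint odd_occ (l : list W) (r : W) : bool :=
  match l with [] => false | x :: l' => xorb (ceqb r x) (odd_occ l' r) end.

Lemma cocycle_word l r :
  Forall (fun s => gen s) l -> cocycle (gprod l) r = odd_occ (word_reflections l) r.
Proof.
  intro Hl. revert r. induction Hl as [|s l Hs _ IH]; intro r; simpl.
  - unfold cocycle. rewrite tits_hom1. auto.
  - rewrite cocycleM, IH, cocycle_gen, xorb_comm by auto. f_equal.
    apply ceqb_iff. rewrite gconjE. unfold gconj. rewrite ginvK. tauto.
Qed.

Lemma odd_occ_NoDup l r : NoDup l -> odd_occ l r = true <-> In r l.
Proof.
  induction 1 as [|x l Hx _ IH]; simpl. { split; [discriminate | tauto]. }
  destruct (ceqb r x) eqn:E.
  - rewrite ceqb_true in E. subst r. destruct (odd_occ l x); simpl; intuition.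
  - rewrite ceqb_false in E. simpl. rewrite IH. intuition.
Qed.

Lemma In_word_reflections l x : In x (word_reflections l) ->
  exists p a q, l = p ++ a :: q /\ x = gconj (ginv (gprod q)) a.
Proof.
  induction l as [|b l IH]; simpl; [tauto|]. intros [<- | Hx].
  - exists [], b, l. auto.
  - destruct (IH Hx) as [p [a [q [-> ->]]]]. exists (b :: p), a, q. auto.
Qed.

Lemma gprodM_word_reflection p a q : gen a ->
  gmul (gprod (p ++ a :: q)) (gconj (ginv (gprod q)) a) = gprod (p ++ q).
Proof.
  intro Ha. rewrite !gprod_app. simpl. unfold gconj. rewrite ginvK, <- !gmulA. f_equal.
  rewrite gmulKVg, gen_mulKg; auto.
Qed.

Lemma ell_delete m a q :
  Forall (fun s => gen s) (m ++ a :: q) -> ell (gprod (m ++ q)) < length (m ++ a :: q).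
Proof.
  intro H. pose proof (ell_word _ (Forall_delete _ _ _ _ H)). rewrite !length_app in *. simpl. lia.
Qed.

Lemma word_reflection_deletion l r : Forall (fun s => gen s) l -> In r (word_reflections l) ->
  exists p a q, l = p ++ a :: q /\ gmul (gprod l) r = gprod (p ++ q) /\
                ell (gmul (gprod l) r) < length l.
Proof.
  intros Hl Hr. destruct (In_word_reflections l r Hr) as [p [a [q [-> ->]]]].
  assert (Ha : gen a) by (apply Forall_app in Hl as [_ Haq]; exact (Forall_inv Haq)).
  rewrite gprodM_word_reflection by exact Ha. exists p, a, q. repeat split; auto.
  apply ell_delete. auto.
Qed.

Lemma reduced_NoDup l : reduced l -> NoDup (word_reflections l).
Proof.
  induction l as [|s l IH]; simpl; intro Hred. { constructor. }
  pose proof (reduced_cons_inv s l Hred) as Hl. constructor; auto.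
  intro Hin. destruct Hred as [Hsl E].
  destruct (word_reflection_deletion l _ (Forall_inv_tail Hsl) Hin) as [p [a [q [_ [_ Hlt]]]]].
  unfold gconj in Hlt. rewrite ginvK, gmulA, gmulKVg in Hlt. simpl in E. lia.
Qed.

Lemma reduced_cocycle l r : reduced l -> cocycle (gprod l) r = true <-> In r (word_reflections l).
Proof. intro Hl. rewrite cocycle_word by apply Hl. apply odd_occ_NoDup, reduced_NoDup; auto. Qed.

Lemma exchange_r l s : reduced l -> gen s -> ell (gmul (gprod l) s) < ell (gprod l) ->
  exists p a q, l = p ++ a :: q /\ gmul (gprod l) s = gprod (p ++ q).
Proof.
  intros Hl Hs Hlt.
  assert (Hws : cocycle (gmul (gprod l) s) s = false).
  { destruct (reduced_word_exists (gmul (gprod l) s)) as [l' [Hl' [El' Ew']]].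
    destruct (cocycle (gmul (gprod l) s) s) eqn:E; auto. exfalso.
    rewrite <- Ew', reduced_cocycle in E by (split; auto; rewrite Ew'; auto).
    destruct (word_reflection_deletion l' s Hl' E) as [p [a [q [_ [_ Hlt']]]]].
    rewrite Ew', gen_mulgK in Hlt' by auto. lia. }
  rewrite cocycle_Mgen in Hws by auto. apply negb_false_iff, reduced_cocycle in Hws; auto.
  destruct (word_reflection_deletion l s (proj1 Hl) Hws) as [p [a [q [E1 [E2 _]]]]]. eauto.
Qed.

Lemma exchange_l l s : reduced l -> gen s -> ell (gmul s (gprod l)) < ell (gprod l) ->
  exists p a q, l = p ++ a :: q /\ gmul s (gprod l) = gprod (p ++ q).
Proof.
  intros Hl Hs Hlt.
  assert (Hrev : ell (gmul (gprod (rev l)) s) < ell (gprod (rev l))).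
  { rewrite gprod_rev, <- (gen_inv s), <- ginvM, !ell_inv by (apply Hl || auto). auto. }
  destruct (exchange_r (rev l) s (reduced_rev l Hl) Hs Hrev) as [p [a [q [E1 E2]]]].
  exists (rev q), a, (rev p). split.
  - rewrite <- (rev_involutive l), E1, rev_app_distr. simpl. rewrite <- app_assoc. auto.
  - assert (Hpq : Forall (fun s => gen s) (p ++ q)).
    { apply (Forall_delete _ _ a). rewrite <- E1. apply Forall_rev, Hl. }
    rewrite <- (ginvK (gmul s (gprod l))), ginvM, (gen_inv s), <- gprod_rev, E2
      by (apply Hl || auto).
    rewrite <- rev_app_distr, gprod_rev; auto.
Qed.

Lemma exchange_r_app r l t : reduced (r ++ l) -> gen t ->
  ell (gmul (gprod (r ++ l)) t) < ell (gprod (r ++ l)) ->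
  (exists p a m, r = p ++ a :: m /\ gmul (gprod (r ++ l)) t = gmul (gprod (p ++ m)) (gprod l)) \/
  (exists m a q, l = m ++ a :: q /\ gmul (gprod l) t = gprod (m ++ q)).
Proof.
  intros Hrl Ht Hlt. destruct (exchange_r _ t Hrl Ht Hlt) as [p [a [q [E1 E2]]]].
  rewrite E2. destruct (app_eq_app_cons _ _ _ _ _ E1) as [[m [-> ->]] | [m [-> ->]]].
  - left. exists p, a, m. rewrite app_assoc, gprod_app. auto.
  - right. exists m, a, q. split; auto. apply (gmul_cancel_l (gprod r)).
    rewrite gmulA, <- gprod_app, E2, <- app_assoc, gprod_app. auto.
Qed.

Lemma exchange_l_app s r l : reduced (r ++ l) -> gen s ->
  ell (gmul s (gprod (r ++ l))) < ell (gprod (r ++ l)) ->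
  (exists p a m, r = p ++ a :: m /\ gmul s (gprod r) = gprod (p ++ m)) \/
  (exists m a q, l = m ++ a :: q /\ gmul s (gprod (r ++ l)) = gmul (gprod r) (gprod (m ++ q))).
Proof.
  intros Hrl Hs Hlt. destruct (exchange_l _ s Hrl Hs Hlt) as [p [a [q [E1 E2]]]].
  rewrite E2. destruct (app_eq_app_cons _ _ _ _ _ E1) as [[m [-> ->]] | [m [-> ->]]].
  - left. exists p, a, m. split; auto. apply (gmul_cancel_r (gprod l)).
    rewrite <- gmulA, <- gprod_app, E2, <- gprod_app, app_assoc. auto.
  - right. exists m, a, q. rewrite <- app_assoc, gprod_app. auto.
Qed.

Lemma shorter_word (P : W -> Prop) l : Forall P l -> Forall (fun s => gen s) l ->
  ell (gprod l) < length l -> exists l', Forall P l' /\ length l' < length l /\ gprod l' = gprod l.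
Proof.
  induction l as [|t l IH] using rev_ind; simpl; intros HP Hl Hlt; [lia|].
  apply Forall_app in HP as [HP Ht], Hl as [Hl Hgt]. apply Forall_inv in Hgt.
  rewrite length_app, gprod_app in Hlt. simpl in Hlt. rewrite gmul1r in Hlt.
  destruct (le_lt_dec (length l) (ell (gprod l))) as [Hge | Hshort].
  - assert (Hred : reduced l) by (split; auto; pose proof (ell_word l Hl); lia).
    assert (Hdesc : ell (gmul (gprod l) t) < ell (gprod l))
      by (destruct (ell_Mgen t (gprod l)); auto; lia).
    destruct (exchange_r l t Hred Hgt Hdesc) as [p [a [q [-> E]]]].
    exists (p ++ q). repeat split.
    + apply (Forall_delete _ _ a). auto.
    + rewrite !length_app. simpl. lia.
    + rewrite <- E, (gprod_app _ [t]). simpl. rewrite gmul1r. auto.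
  - destruct (IH HP Hl Hshort) as [l' [HP' [Hlen E]]]. exists (l' ++ [t]). repeat split.
    + apply Forall_app. auto.
    + rewrite !length_app. simpl. lia.
    + rewrite !gprod_app, E. auto.
Qed.

(** * Parabolic subgroups and double cosets *)

Section Parabolic.
Variable J : W -> Prop.
Hypothesis HJ : subS J.

Lemma inWJ1 : inWJ J gone.
Proof. exists []. auto. Qed.

Lemma inWJM u v : inWJ J u -> inWJ J v -> inWJ J (gmul u v).
Proof.
  intros [l [Hl <-]] [l' [Hl' <-]]. exists (l ++ l'). rewrite gprod_app. split; auto.
  apply Forall_app. auto.
Qed.

Lemma inWJ_gen s : J s -> inWJ J s.
Proof. intro Hs. exists [s]. simpl. rewrite gmul1r. auto. Qed.

Lemma Forall_subS l : Forall J l -> Forall (fun s => gen s) l.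
Proof. apply Forall_impl. exact HJ. Qed.

Lemma inWJ_inv u : inWJ J u -> inWJ J (ginv u).
Proof.
  intros [l [Hl <-]]. exists (rev l). split; [apply Forall_rev; auto|].
  apply gprod_rev, Forall_subS. auto.
Qed.

Lemma reduced_J_word v : inWJ J v -> exists l, Forall J l /\ reduced l /\ gprod l = v.
Proof.
  intro Hv.
  destruct (least_nat (fun n => exists l, Forall J l /\ length l = n /\ gprod l = v))
    as [n [[l [Hl [<- <-]]] Hmin]].
  { destruct Hv as [l [Hl Hv]]. eauto. }
  exists l. repeat split; auto using Forall_subS.
  pose proof (ell_word l (Forall_subS l Hl)).
  destruct (le_lt_dec (length l) (ell (gprod l))) as [Hge | Hlt]; [lia|].
  destruct (shorter_word J l Hl (Forall_subS l Hl) Hlt) as [l' [Hl' [Hlen E]]].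
  specialize (Hmin (length l') (ex_intro _ l' (conj Hl' (conj eq_refl E)))). lia.
Qed.

Definition right_reduced (d : W) : Prop := forall t, J t -> ell d < ell (gmul d t).
Definition left_reduced (d : W) : Prop := forall t, J t -> ell d < ell (gmul t d).

Section CosetMinimum.
Variable w0 : W.
Hypothesis Hw0 : forall u, inWJ J u -> ell w0 <= ell (gmul w0 u).

(* A descent of [w0 l t] cannot delete a letter of [w0] (that would shorten [w0] inside
   its coset) nor of the reduced word [l t]. *)
Lemma coset_min_additive_word l :
  Forall J l -> reduced l -> ell (gmul w0 (gprod l)) = ell w0 + length l.
Proof.
  induction l as [|t l IH] using rev_ind; intros HlJ Hl.
  { simpl. rewrite gmul1r. lia. }
  apply Forall_app in HlJ as [HlJ HtJ]. apply Forall_inv in HtJ as Ht.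
  specialize (IH HlJ (reduced_snoc_inv _ _ Hl)).
  rewrite length_app, gprod_app. simpl. rewrite gmul1r, gmulA.
  destruct (ell_Mgen t (gmul w0 (gprod l)) (HJ t Ht)) as [E | E]; [lia | exfalso].
  destruct (reduced_word_exists w0) as [r [Hr [Er Ew0]]].
  assert (Hrl : reduced (r ++ l)).
  { split; [apply Forall_app; split; auto; apply Forall_subS, HlJ|].
    rewrite gprod_app, Ew0, IH, length_app. lia. }
  assert (Hlt : ell (gmul (gprod (r ++ l)) t) < ell (gprod (r ++ l)))
    by (rewrite gprod_app, Ew0; lia).
  destruct (exchange_r_app r l t Hrl (HJ t Ht) Hlt)
    as [[p [a [m [-> Eq]]]] | [m [a [q [-> Eq]]]]].
  - rewrite gprod_app, Ew0 in Eq.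
    assert (Hw1 : gprod (p ++ m) = gmul w0 (gmul (gmul (gprod l) t) (ginv (gprod l)))).
    { apply (gmul_cancel_r (gprod l)).
      rewrite <- Eq, <- (gmulA w0 _ (gprod l)), gmulgKV, gmulA. auto. }
    assert (HWl : inWJ J (gprod l)) by (exists l; auto).
    pose proof (Hw0 _ (inWJM _ _ (inWJM _ _ HWl (inWJ_gen t Ht)) (inWJ_inv _ HWl))) as Hmin.
    rewrite <- Hw1 in Hmin. pose proof (ell_delete p a m Hr). lia.
  - pose proof (ell_delete m a q (Forall_subS _ HlJ)) as Hdel.
    destruct Hl as [_ El]. rewrite gprod_app in El. simpl in El. rewrite gmul1r, Eq in El.
    repeat rewrite length_app in *. simpl in *. lia.
Qed.

Lemma coset_min_additive v : inWJ J v -> ell (gmul w0 v) = ell w0 + ell v.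
Proof.
  intro Hv. destruct (reduced_J_word v Hv) as [l [HlJ [Hl <-]]].
  rewrite coset_min_additive_word, (proj2 Hl); auto.
Qed.
End CosetMinimum.

(* With [w0] a shortest element of [d W_J], write [d = w0 l] for a reduced [J]-word [l]; a last
   letter [t] of [l] would make [d t] shorter than [d]. *)
Lemma right_reduced_coset_min d : right_reduced d -> forall u, inWJ J u -> ell d <= ell (gmul d u).
Proof.
  intro Hd.
  destruct (least_nat (fun n => exists u, inWJ J u /\ ell (gmul d u) = n))
    as [n [[u0 [Hu0 <-]] Hmin]].
  { exists (ell (gmul d gone)), gone. split; auto using inWJ1. }
  set (w0 := gmul d u0) in *.
  assert (Hw0 : forall u, inWJ J u -> ell w0 <= ell (gmul w0 u)).
  { intros u Hu. unfold w0. rewrite <- gmulA. apply Hmin. exists (gmul u0 u). auto using inWJM. }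
  destruct (reduced_J_word (ginv u0) (inWJ_inv _ Hu0)) as [l [HlJ [Hl El]]].
  assert (Ed : d = gmul w0 (gprod l)) by (rewrite El; unfold w0; rewrite gmulgK; auto).
  clearbody w0.
  destruct l as [|t l _] using rev_ind.
  - simpl in Ed. rewrite gmul1r in Ed. rewrite Ed. exact Hw0.
  - exfalso. apply Forall_app in HlJ as [HlJ HtJ]. apply Forall_inv in HtJ as Ht.
    assert (Edt : gmul d t = gmul w0 (gprod l)).
    { rewrite Ed, gprod_app. simpl. rewrite gmul1r, <- gmulA, gen_mulgK; auto. }
    assert (HlJt : Forall J (l ++ [t])) by (apply Forall_app; auto).
    pose proof (reduced_snoc_inv l t Hl).
    specialize (Hd t Ht). rewrite Edt, Ed, !(coset_min_additive_word w0 Hw0) in Hd by auto.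
    rewrite length_app in Hd. simpl in Hd. lia.
Qed.

Lemma right_reduced_additive d v : right_reduced d -> inWJ J v -> ell (gmul d v) = ell d + ell v.
Proof. intros Hd Hv. apply coset_min_additive; auto. apply right_reduced_coset_min. auto. Qed.

Lemma right_reduced_coset_unique d v : right_reduced d -> right_reduced (gmul d v) -> inWJ J v ->
  v = gone.
Proof.
  intros Hd Hdv Hv. apply ell_eq0.
  pose proof (right_reduced_additive d v Hd Hv) as E.
  pose proof (right_reduced_additive (gmul d v) (ginv v) Hdv (inWJ_inv v Hv)) as E'.
  rewrite gmulgK, ell_inv in E'. lia.
Qed.

Lemma left_reduced_additive d u : left_reduced d -> inWJ J u -> ell (gmul u d) = ell u + ell d.
Proof.
  intros Hd Hu. rewrite <- ell_inv, ginvM, right_reduced_additive, !ell_inv; auto using inWJ_inv.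
  - lia.
  - intros t Ht. rewrite <- (ell_inv (gmul (ginv d) t)), ginvM, ginvK, (gen_inv t), !ell_inv; auto.
Qed.
End Parabolic.

(* Induction on a reduced word [s u1] of [u]: since [s d' v = u1 d] is shorter than [d' v],
   the exchange condition deletes a letter of [d'] (impossible, [d'] is left reduced) or of
   [v], leaving [u1 d = d' v'] with [v'] in [W_J]. *)
Lemma double_coset_reduced_unique (I J : W -> Prop) (d d' u v : W) : subS I -> subS J ->
  left_reduced I d -> right_reduced J d -> left_reduced I d' -> right_reduced J d' ->
  inWJ I u -> inWJ J v -> gmul u d = gmul d' v -> d = d'.
Proof.
  intros HI HJ Hld Hrd Hld' Hrd' Hu Hv E.
  destruct (reduced_J_word I HI u Hu) as [lu [HluI [Hlu <-]]].
  clear Hu. revert v Hv E. induction lu as [|s l1 IH]; intros v Hv E; simpl in E.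
  - rewrite gmul1l in E. subst d.
    rewrite (right_reduced_coset_unique J HJ d' v Hrd' Hrd Hv). apply gmul1r.
  - apply Forall_cons_iff in HluI as [HsI Hl1I].
    pose proof (reduced_cons_inv _ _ Hlu) as Hl1.
    assert (Hl1W : inWJ I (gprod l1)) by (exists l1; auto).
    destruct (reduced_word_exists d') as [rd [Hrd1 [Erd Grd]]].
    destruct (reduced_J_word J HJ v Hv) as [lv [HlvJ [Hlv Glv]]].
    assert (Hw : reduced (rd ++ lv)).
    { split. { apply Forall_app. split; auto. apply Hlv. }
      rewrite gprod_app, Grd, Glv, (right_reduced_additive J HJ d' v Hrd' Hv), length_app, Erd,
        <- (proj2 Hlv), Glv. auto. }
    assert (Es : gmul s (gmul d' v) = gmul (gprod l1) d)
      by (rewrite <- E, <- gmulA, gen_mulKg; auto).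
    assert (Hlt : ell (gmul s (gprod (rd ++ lv))) < ell (gprod (rd ++ lv))).
    { assert (Hsl1W : inWJ I (gmul s (gprod l1))) by (exists (s :: l1); auto).
      rewrite gprod_app, Grd, Glv, Es, <- E, (left_reduced_additive I HI d _ Hld Hl1W),
        (left_reduced_additive I HI d _ Hld Hsl1W).
      pose proof (proj2 Hlu). pose proof (proj2 Hl1). simpl in *. lia. }
    destruct (exchange_l_app s rd lv Hw (HI s HsI) Hlt)
      as [[p [a [m [-> Eq]]]] | [m [a [q [-> Eq]]]]].
    + pose proof (Hld' s HsI) as Hs'. rewrite <- Grd, Eq in Hs'. rewrite Grd in Hs'.
      pose proof (ell_delete p a m Hrd1). lia.
    + apply (IH Hl1I Hl1 (gprod (m ++ q))).
      * exists (m ++ q). split; auto. apply (Forall_delete _ _ a). auto.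
      * rewrite <- Es, <- Glv, <- Grd, <- gprod_app. exact Eq.
Qed.

Lemma left_reduced_right_factor (I J : W -> Prop) d v : subS I -> subS J ->
  right_reduced J d -> inWJ J v -> left_reduced I (gmul d v) -> left_reduced I d.
Proof.
  intros HI HJ Hd Hv Hdv s Hs. specialize (Hdv s Hs).
  rewrite gmulA, (right_reduced_additive J HJ d v Hd Hv) in Hdv.
  pose proof (ellM (gmul s d) v). destruct (ell_genM s d (HI s Hs)); lia.
Qed.

(** * Galleries and residues *)

Section Building.
Variable D : building C.
Notation dl := (delta D).

Lemma delta_xx (x : D) : dl x x = gone.
Proof. apply (WD1 D). auto. Qed.

Lemma delta_gen_sym (x y : D) : gen (dl x y) -> dl y x = dl x y.
Proof.
  intro Hs. destruct (WD2 D y x x Hs eq_refl) as [[E | E] _]; rewrite delta_xx in E; symmetry in E.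
  - apply ginv_unique in E. rewrite gen_inv in E; auto.
  - apply (WD1 D) in E. subst. rewrite delta_xx in Hs. destruct (cS_ne1 C Hs). auto.
Qed.

Inductive gallery : D -> D -> list W -> Prop :=
  | gallery_nil x : gallery x x []
  | gallery_cons x y z l : gen (dl x y) -> gallery y z l -> gallery x z (dl x y :: l).

Lemma gallery_of_word l : Forall (fun s => gen s) l ->
  forall x y, gprod l = dl x y -> gallery x y l.
Proof.
  induction 1 as [|s l Hs Hl IH]; simpl; intros x y E.
  - symmetry in E. apply (WD1 D) in E. subst. constructor.
  - destruct (WD3 D s x y Hs) as [x' [E1 E2]].
    assert (E3 : dl x x' = s) by (rewrite delta_gen_sym; rewrite E1; auto).
    rewrite <- E3. constructor; [rewrite E3; auto|].
    apply IH. rewrite E2, <- E, gen_mulKg; auto.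
Qed.

Lemma gallery_reduced_delta x y l : gallery x y l -> reduced l -> dl x y = gprod l.
Proof.
  induction 1 as [x | x y z l Hs Hg IH]; intro Hred; [apply delta_xx|].
  pose proof (reduced_cons_inv _ _ Hred) as Hl. specialize (IH Hl).
  destruct Hred as [_ E]. simpl in *. rewrite <- IH.
  apply (proj2 (WD2 D y z x Hs eq_refl) (ell (dl y z))); apply is_lenE; [reflexivity|].
  rewrite IH, E, (proj2 Hl). reflexivity.
Qed.

Lemma gallery_app x y z l1 l2 : gallery x y l1 -> gallery y z l2 -> gallery x z (l1 ++ l2).
Proof. induction 1; simpl; intros; auto. constructor; auto. Qed.

Lemma gallery_rev x y l : gallery x y l -> gallery y x (rev l).
Proof.
  induction 1 as [x | x y z l Hs _ IH]; simpl; [constructor|].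
  apply gallery_app with y; auto. rewrite <- (delta_gen_sym x y Hs).
  constructor; [rewrite delta_gen_sym|]; auto. constructor.
Qed.

Lemma delta_inv (x y : D) : dl y x = ginv (dl x y).
Proof.
  destruct (reduced_word_exists (dl x y)) as [l [Hl [El Gl]]].
  assert (Hred : reduced l) by (split; auto; rewrite Gl; auto).
  pose proof (gallery_rev _ _ _ (gallery_of_word l Hl x y Gl)) as Hg.
  rewrite (gallery_reduced_delta _ _ _ Hg (reduced_rev l Hred)), gprod_rev, Gl; auto.
Qed.

Lemma gal_leE (x y : D) n : gal_le D x y n <-> ell (dl x y) <= n.
Proof.
  split.
  - induction 1 as [x n | x y z n Hs _ IH]; [rewrite delta_xx, ell1; lia|].
    destruct (WD2 D y z x Hs eq_refl) as [[E | E] _]; rewrite E; [|lia].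
    pose proof (ell_genM_le _ (dl y z) Hs). lia.
  - intro H. destruct (reduced_word_exists (dl x y)) as [l [Hl [El Gl]]].
    pose proof (gallery_of_word l Hl x y Gl) as Hg. rewrite <- El in H. clear Hl El Gl.
    revert n H. induction Hg as [x | x y z l Hs _ IH]; intros n H; [constructor|].
    destruct n as [|n]; simpl in H; [lia|]. apply gal_step with y; auto. apply IH. lia.
Qed.

Lemma gdist_leE (x z y : D) : gdist_le x z y <-> ell (dl x z) <= ell (dl x y).
Proof.
  split.
  - intro H. apply gal_leE, H, gal_leE. auto.
  - intros H n Hn. apply gal_leE. apply gal_leE in Hn. lia.
Qed.

Lemma delta_residue_shift (J : W -> Prop) : subS J -> forall (c y : D), inWJ J (dl c y) ->
  forall z, exists u, inWJ J u /\ dl c z = gmul u (dl y z).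
Proof.
  intros HJ c y [l [Hl E]] z. revert c E. induction Hl as [|s l Hs _ IH]; simpl; intros c E.
  - symmetry in E. apply (WD1 D) in E. subst. exists gone. rewrite gmul1l. auto using inWJ1.
  - destruct (WD3 D s c y (HJ s Hs)) as [c' [E1 E2]].
    rewrite <- E, gen_mulKg in E2 by auto. destruct (IH c' (eq_sym E2)) as [u [Hu Eu]].
    destruct (WD2 D c z c' (HJ s Hs) E1) as [[F | F] _].
    + exists (gmul s u). split; [apply inWJM; auto using inWJ_gen|].
      rewrite <- gmulA, <- Eu, F, gen_mulKg; auto.
    + exists u. rewrite <- F. auto.
Qed.

Lemma residue_memberE (J : W -> Prop) (R : chset D) : subS J -> is_residue J R ->
  forall y, R y -> forall z, R z <-> inWJ J (dl y z).
Proof.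
  intros HJ [c Hc] y Hy z. rewrite Hc. apply Hc in Hy.
  destruct (delta_residue_shift J HJ c y Hy z) as [u [Hu ->]]. split; intro H.
  - rewrite <- (gmulKg u (dl y z)). apply inWJM; auto using inWJ_inv.
  - apply inWJM; auto.
Qed.

(** * Minimal Weyl distance between two residues *)

Section TwoResidues.
Variables (I J : W -> Prop) (A B : chset D).
Hypotheses (HI : subS I) (HJ : subS J) (HA : is_residue I A) (HB : is_residue J B).

Lemma residue_step_l (x y : D) s : A x -> I s -> exists x', A x' /\ dl x' y = gmul s (dl x y).
Proof.
  intros Hx Hs. destruct (WD3 D s x y (HI s Hs)) as [x' [E1 E2]]. exists x'. split; auto.
  apply (residue_memberE I A HI HA x Hx). rewrite delta_gen_sym; rewrite E1; auto using inWJ_gen.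
Qed.

Lemma residue_step_r (x y : D) t : B y -> J t -> exists y', B y' /\ dl x y' = gmul (dl x y) t.
Proof.
  intros Hy Ht. destruct (WD3 D t y x (HJ t Ht)) as [y' [E1 E2]]. exists y'. split.
  - apply (residue_memberE J B HJ HB y Hy). rewrite delta_gen_sym; rewrite E1; auto using inWJ_gen.
  - rewrite delta_inv, E2, (delta_inv x y), ginvM, ginvK, (gen_inv t); auto.
Qed.

Lemma delta_double_coset (x x' y y' : D) : A x -> A x' -> B y -> B y' ->
  exists u v, inWJ I u /\ inWJ J v /\ dl x' y' = gmul (gmul u (dl x y)) v.
Proof.
  intros Hx Hx' Hy Hy'.
  assert (Hxx' : inWJ I (dl x' x)) by (apply (residue_memberE I A HI HA x'); auto).
  destruct (delta_residue_shift I HI x' x Hxx' y') as [u [Hu E1]].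
  assert (Hyy' : inWJ J (dl y' y)) by (apply (residue_memberE J B HJ HB y'); auto).
  destruct (delta_residue_shift J HJ y' y Hyy' x) as [v [Hv E2]].
  exists u, (ginv v). repeat split; auto using inWJ_inv.
  rewrite E1, (delta_inv y' x), E2, ginvM, <- (delta_inv y x), gmulA. auto.
Qed.

Lemma min_delta_reduced w : is_min_delta A B w -> left_reduced I w /\ right_reduced J w.
Proof.
  intros [[x [y [Hx [Hy <-]]]] Hmin]. split.
  - intros s Hs. destruct (residue_step_l x y s Hx Hs) as [x' [Hx' E]].
    assert (Hle : ell_le (dl x y) (gmul s (dl x y))) by (apply Hmin; exists x', y; auto).
    apply ell_leE in Hle. destruct (ell_genM s (dl x y) (HI s Hs)); lia.
  - intros t Ht. destruct (residue_step_r x y t Hy Ht) as [y' [Hy' E]].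
    assert (Hle : ell_le (dl x y) (gmul (dl x y) t)) by (apply Hmin; exists x, y'; auto).
    apply ell_leE in Hle. destruct (ell_Mgen t (dl x y) (HJ t Ht)); lia.
Qed.

Lemma reduced_delta_unique (x y x' y' : D) : A x -> B y -> A x' -> B y' ->
  left_reduced I (dl x y) -> right_reduced J (dl x y) ->
  left_reduced I (dl x' y') -> right_reduced J (dl x' y') -> dl x y = dl x' y'.
Proof.
  intros Hx Hy Hx' Hy' Hl Hr Hl' Hr'.
  destruct (delta_double_coset x x' y y' Hx Hx' Hy Hy') as [u [v [Hu [Hv E]]]].
  apply (double_coset_reduced_unique I J _ _ u (ginv v) HI HJ Hl Hr Hl' Hr' Hu
    (inWJ_inv J HJ v Hv)).
  rewrite E, gmulgK. auto.
Qed.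

Lemma min_delta_unique w w' : is_min_delta A B w -> is_min_delta A B w' -> w = w'.
Proof.
  intros Hw Hw'. pose proof (min_delta_reduced w Hw) as [Hl Hr].
  pose proof (min_delta_reduced w' Hw') as [Hl' Hr'].
  destruct Hw as [[x [y [Hx [Hy <-]]]] _], Hw' as [[x' [y' [Hx' [Hy' <-]]]] _].
  apply reduced_delta_unique; auto.
Qed.

Lemma min_delta_exists x y : A x -> B y -> exists w, is_min_delta A B w.
Proof.
  intros Hx Hy.
  destruct (least_nat (fun n => exists w, delta_set A B w /\ ell w = n))
    as [n [[w [Hw <-]] Hmin]].
  { exists (ell (dl x y)), (dl x y). split; auto. exists x, y. auto. }
  exists w. split; auto. intros w' Hw'. apply ell_leE, Hmin. eauto.
Qed.

Lemma reduced_delta_min x y : A x -> B y ->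
  left_reduced I (dl x y) -> right_reduced J (dl x y) -> is_min_delta A B (dl x y).
Proof.
  intros Hx Hy Hl Hr. destruct (min_delta_exists x y Hx Hy) as [w Hw].
  pose proof (min_delta_reduced w Hw) as [Hlw Hrw].
  destruct Hw as [[x0 [y0 [Hx0 [Hy0 Ew]]]] Hmin]. subst w.
  rewrite (reduced_delta_unique x y x0 y0); auto. split; auto. exists x0, y0. auto.
Qed.

Lemma proj_left_reduced x b : is_proj A b x -> left_reduced I (dl x b).
Proof.
  intros [Hx Hmin] s Hs. destruct (residue_step_l x b s Hx Hs) as [x' [Hx' E]].
  apply Hmin, gdist_leE in Hx'.
  rewrite (delta_inv x b), (delta_inv x' b), !ell_inv, E in Hx'.
  destruct (ell_genM s (dl x b) (HI s Hs)); lia.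
Qed.

(* Take [y] in [B] closest to [x]: [δ(x,y)] is right reduced, and it is a left factor of the
   left reduced [δ(x,b)], hence left reduced too. *)
Lemma proj_set_min_delta x : proj_set A B x -> exists y, B y /\ is_min_delta A B (dl x y).
Proof.
  intros [b [Hb Hproj]].
  destruct (least_nat (fun n => exists y, B y /\ ell (dl x y) = n)) as [n [[y [Hy <-]] Hmin]].
  { eauto. }
  assert (Hr : right_reduced J (dl x y)).
  { intros t Ht. destruct (residue_step_r x y t Hy Ht) as [y' [Hy' E]].
    assert (ell (dl x y) <= ell (gmul (dl x y) t)) by (apply Hmin; exists y'; rewrite E; auto).
    destruct (ell_Mgen t (dl x y) (HJ t Ht)); lia. }
  destruct (delta_residue_shift J HJ y b (proj1 (residue_memberE J B HJ HB y Hy b) Hb) x)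
    as [v [Hv Ev]].
  assert (Eb : dl x b = gmul (dl x y) v).
  { rewrite (delta_inv b x), (delta_inv y x), Ev, ginvM, gmulgKV. auto. }
  exists y. split; auto. apply reduced_delta_min; auto; [apply Hproj|].
  apply (left_reduced_right_factor I J _ v); auto.
  rewrite <- Eb. apply proj_left_reduced. auto.
Qed.
End TwoResidues.

Section Action.
Variables (G : group) (act : G -> D -> D).
Hypotheses (Hact : is_action act) (Htp : type_preserving act).

Lemma act_invK g x : act (ginv g) (act g x) = x.
Proof. destruct Hact as [Hact1 HactM]. rewrite <- HactM, gmulVl, Hact1. auto. Qed.

Lemma act_invKV g x : act g (act (ginv g) x) = x.
Proof. destruct Hact as [Hact1 HactM]. rewrite <- HactM, gmulVr, Hact1. auto. Qed.

Lemma img_eqE g (X Y : chset D) : set_eq (img act g X) Y <-> forall u, X u <-> Y (act g u).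
Proof.
  split; intro H.
  - intro u. split; intro Hu.
    + apply H. exists u. auto.
    + apply H in Hu as [x [Hx E]]. apply (f_equal (act (ginv g))) in E.
      rewrite !act_invK in E. subst. auto.
  - intro z. split.
    + intros [x [Hx <-]]. apply H. auto.
    + intro Hz. exists (act (ginv g) z). rewrite act_invKV. split; auto.
      apply H. rewrite act_invKV. auto.
Qed.

Lemma img_transfer g1 g2 (X X' Y : chset D) :
  set_eq (img act g1 X) Y -> set_eq (img act g2 X') Y -> set_eq (img act (gmul (ginv g2) g1) X) X'.
Proof.
  rewrite !img_eqE. intros Hg1 Hg2 u. rewrite (proj2 Hact), Hg1, Hg2, act_invKV. tauto.
Qed.

Lemma residue_transport (J : W -> Prop) (R R' : chset D) c c' g : subS J ->
  is_residue J R -> is_residue J R' -> R c -> R' c' -> act g c = c' -> set_eq (img act g R) R'.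
Proof.
  intros HJ HR HR' Hc Hc' <-. apply img_eqE. intro u.
  rewrite (residue_memberE J R HJ HR c Hc u), (residue_memberE J R' HJ HR' _ Hc' (act g u)), Htp.
  tauto.
Qed.

Hypothesis Hwt : weyl_transitive act.

Lemma stab_pair_transitive (I J : W -> Prop) (A B : chset D) x y x' y' : subS I -> subS J ->
  is_residue I A -> is_residue J B -> A x -> B y -> A x' -> B y' -> dl x y = dl x' y' ->
  exists g, stab act A g /\ stab act B g /\ act g x = x' /\ act g y = y'.
Proof.
  intros HI HJ HA HB Hx Hy Hx' Hy' E. destruct (Hwt x y x' y' E) as [g [Ex Ey]].
  exists g. split; [|split]; auto.
  - apply (residue_transport I A A x x' g); auto.
  - apply (residue_transport J B B y y' g); auto.
Qed.

Lemma stab_map_same_min_delta (J : W -> Prop) (A B R : chset D) : subS J -> is_residue J B ->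
  same_type R A -> same_min_delta B R B A -> exists g, stab act B g /\ set_eq (img act g R) A.
Proof.
  intros HJ HB [K [HK [_ [HR HA]]]] [w [[[b [r [Hb [Hr E]]]] _] [[b' [a [Hb' [Ha E']]]] _]]].
  destruct (Hwt b r b' a (eq_trans E (eq_sym E'))) as [g [Eb Er]].
  exists g. split.
  - apply (residue_transport J B B b b' g); auto.
  - apply (residue_transport K R A r a g); auto.
Qed.

Lemma stab_transitive_same_min_delta (J : W -> Prop) (A B R R' : chset D) :
  subS J -> is_residue J B ->
  same_type R A -> same_min_delta B R B A -> same_type R' A -> same_min_delta B R' B A ->
  exists g, stab act B g /\ set_eq (img act g R) R'.
Proof.
  intros HJ HB HRA HRm HR'A HR'm.
  destruct (stab_map_same_min_delta J A B R HJ HB HRA HRm) as [g1 [HB1 HR1]].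
  destruct (stab_map_same_min_delta J A B R' HJ HB HR'A HR'm) as [g2 [HB2 HR2]].
  exists (gmul (ginv g2) g1). split; eapply img_transfer; eauto.
Qed.

Lemma proj_set_mem (R X : chset D) x : proj_set R X x -> R x.
Proof. intros [b [_ [Hx _]]]. auto. Qed.

Lemma proj_set_stab_transitive (I J : W -> Prop) (A B : chset D) x x' : subS I -> subS J ->
  is_residue I A -> is_residue J B -> proj_set A B x -> proj_set A B x' ->
  exists g, stab act A g /\ stab act B g /\ act g x = x'.
Proof.
  intros HI HJ HA HB Hx Hx'.
  destruct (proj_set_min_delta I J A B HI HJ HA HB x Hx) as [y [Hy Hm]].
  destruct (proj_set_min_delta I J A B HI HJ HA HB x' Hx') as [y' [Hy' Hm']].
  destruct (stab_pair_transitive I J A B x y x' y' HI HJ HA HB (proj_set_mem A B x Hx) Hy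
    (proj_set_mem A B x' Hx') Hy' (min_delta_unique I J A B HI HJ HA HB _ _ Hm Hm'))
    as [g [HgA [HgB [Ex _]]]].
  exists g. auto.
Qed.
End Action.
End Building.
End Coxeter.

Theorem lemma4p1 (C : coxeter) (D : building C) (G : group) (act : G -> D -> D)
  (Hact : is_action act) (Htp : type_preserving act) (Hwt : weyl_transitive act)
  (A B : chset D) (HA : simplex A) (HB : simplex B) :
  (forall R R' : chset D,
     simplex R -> same_type R A -> same_min_delta B R B A ->
     simplex R' -> same_type R' A -> same_min_delta B R' B A ->
     exists g, stab act B g /\ set_eq (img act g R) R') /\
  (forall x x', proj_set A B x -> proj_set A B x' ->
     exists g, stab act A g /\ stab act B g /\ act g x = x') /\
  (forall y y', proj_set B A y -> proj_set B A y' ->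
     exists g, stab act A g /\ stab act B g /\ act g y = y') /\
  (forall x y x' y',
     proj_set A B x -> proj_set B A y -> is_min_delta A B (delta D x y) ->
     proj_set A B x' -> proj_set B A y' -> is_min_delta A B (delta D x' y') ->
     exists g, stab act A g /\ stab act B g /\ act g x = x' /\ act g y = y').
Proof.
  destruct HA as [I [HI [_ HAr]]], HB as [J [HJ [_ HBr]]].
  split; [|split; [|split]].
  - intros R R' _ HRA HRm _ HR'A HR'm.
    exact (stab_transitive_same_min_delta C D G act Hact Htp Hwt J A B R R' HJ HBr
      HRA HRm HR'A HR'm).
  - intros x x' Hx Hx'.
    exact (proj_set_stab_transitive C D G act Hact Htp Hwt I J A B x x' HI HJ HAr HBr Hx Hx').
  - intros y y' Hy Hy'.
    destruct (proj_set_stab_transitive C D G act Hact Htp Hwt J I B A y y' HJ HI HBr HAr Hy Hy')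
      as [g [HgB [HgA Ey]]].
    exists g. auto.
  - intros x y x' y' Hx Hy Hm Hx' Hy' Hm'.
    exact (stab_pair_transitive C D G act Hact Htp Hwt I J A B x y x' y' HI HJ HAr HBr
      (proj_set_mem C D A B x Hx) (proj_set_mem C D B A y Hy)
      (proj_set_mem C D A B x' Hx') (proj_set_mem C D B A y' Hy')
      (min_delta_unique C D I J A B HI HJ HAr HBr _ _ Hm Hm')).
Qed.
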